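(* The multiplication map $\widetilde{\mathrm{Sym}}\otimes\big(\mathrm{NSym}\,\square_{\mathrm{Sym}}\,\mathbb{Z}\big)\to\mathrm{NSym}$ is an isomorphism.
   Context: $\mathrm{NSym}=\mathbb{Z}\langle Z_1,Z_2,\ldots\rangle$ is the free associative algebra (non-commutative symmetric functions) with coproduct $\Delta Z_n=\sum_{p+q=n}Z_p\otimes Z_q$ ($Z_0=1$); $\mathrm{Sym}=\mathbb{Z}[Z_1,Z_2,\ldots]$ is its abelianization with projection $\pi\colon\mathrm{NSym}\to\mathrm{Sym}$. The cotensor product is $\mathrm{NSym}\,\square_{\mathrm{Sym}}\,\mathbb{Z}=\{n\in\mathrm{NSym}:(\mathrm{id}\otimes\pi)\Delta n=n\otimes1\}$. $\widetilde{\mathrm{Sym}}\subset\mathrm{NSym}$ is the $\mathbb{Z}$-span of the monomials $Z_{i_1}^{a_1}\cdots Z_{i_n}^{a_n}$ with $i_1\le\cdots\le i_n$. The tensor product is over $\mathbb{Z}$. *)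

From mathcomp Require Import all_boot all_algebra.
Set Implicit Arguments. Unset Strict Implicit. Unset Printing Implicit Defensive.
Import GRing.Theory.
Local Open Scope ring_scope.

(* Words in the generators of NSym.  The letter [i : nat] stands for the
   generator Z_(i+1); the empty word is 1 = Z_0.  An element of NSym (free
   Z-module on words) is a finitely supported coefficient function
   [word -> int]. *)
Definition word := seq nat.

Definition NSym_elt (f : word -> int) : Prop :=
  exists S : seq word, forall w, f w != 0 -> w \in S.

Definition Zword (p : nat) : word := if p is p'.+1 then [:: p'] else [::].

(* All terms (with multiplicity) of Delta(w) = prod_j Delta(Z_(n_j)),
   with Delta Z_n = sum_(p+q=n) Z_p (x) Z_q. *)
Fixpoint splits (w : word) : seq (word * word) :=
  match w with
  | [::] => [:: ([::], [::])]
  | a :: w' =>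
      [seq (Zword p ++ s.1, Zword (a.+1 - p) ++ s.2)
         | p <- iota 0 a.+2, s <- splits w']
  end.

(* Coefficient of  u (x) [m]  in (id (x) pi) Delta f, where [m] is the
   commutative monomial of Sym given by (the multiset of) the word m;
   S is any finite list covering the support of f. *)
Definition coproj_coef (f : word -> int) (S : seq word) (u m : word) : int :=
  \sum_(w <- undup S)
     f w * (count (fun s : word * word => (s.1 == u) && perm_eq s.2 m)
                  (splits w))%:Z.

(* f lies in the cotensor product NSym []_Sym Z :
   (id (x) pi) Delta f = f (x) 1. *)
Definition in_cotensor (f : word -> int) : Prop :=
  exists S : seq word, (forall w, f w != 0 -> w \in S) /\
    forall u m, coproj_coef f S u m = (if m == [::] then f u else 0).

(* Sym~ is free on the monomials Z_(i_1)^(a_1)...Z_(i_n)^(a_n), i_1<=...<=i_n,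
   i.e. on the nondecreasing words.  Hence an element of
   Sym~ (x)_Z (NSym []_Sym Z) is a finitely supported family (c_w)_w,
   w nondecreasing, of elements of the cotensor product; c w x is the
   coefficient of the word x in c_w. *)
Definition tensor_elt (c : word -> word -> int) : Prop :=
  [/\ exists W : seq word, forall w x, c w x != 0 -> w \in W,
      forall w x, c w x != 0 -> sorted leq w &
      forall w, in_cotensor (c w)].

(* The multiplication map  sum_w w (x) c_w  |->  sum_w w * c_w,
   evaluated at the coefficient of the word x. *)
Definition mult_map (c : word -> word -> int) (x : word) : int :=
  \sum_(i < (size x).+1) c (take i x) (drop i x).

(* Let rho = (id (x) pi) Delta, a coaction of Sym on NSym whose coinvariants form
   the cotensor product.  For a word w and a coinvariant c,
   rho (w c) = (id (x) pi)(Delta w) . (c (x) 1), whose part of top Sym-degree is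
   c (x) pi(w).  Since distinct nondecreasing words have distinct images in Sym,
   comparing top-degree parts proves injectivity by descending induction on deg w.
   Conversely, write rho n = sum_m n_m (x) [m].  Coassociativity of Delta shows
   that the coefficients n_m with deg m maximal are coinvariants, and subtracting
   sum_m m n_m lowers the top degree of rho n; induction gives surjectivity. *)

From mathcomp Require Import all_boot all_algebra.
From Stdlib Require Import Classical.
Set Implicit Arguments. Unset Strict Implicit. Unset Printing Implicit Defensive.
Import GRing.Theory.

Local Open Scope ring_scope.

Definition deg (w : word) : nat := (\sum_(a <- w) a.+1)%N.

Lemma deg_nil : deg [::] = 0%N. Proof. exact: big_nil. Qed.

Lemma deg_cons a w : deg (a :: w) = (a.+1 + deg w)%N. Proof. exact: big_cons. Qed.

Lemma deg_cat u v : deg (u ++ v) = (deg u + deg v)%N. Proof. exact: big_cat. Qed.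

Lemma perm_deg u v : perm_eq u v -> deg u = deg v. Proof. exact: perm_big. Qed.

Lemma deg_Zword p : deg (Zword p) = p.
Proof. by case: p => [|p]; rewrite /= ?deg_nil // deg_cons deg_nil addn0. Qed.

Lemma deg_eq0 w : (deg w == 0%N) = (w == [::]).
Proof. by case: w => [|a w]; rewrite ?deg_nil // deg_cons. Qed.

Lemma Zword_eq_nil p : (Zword p == [::]) = (p == 0%N).
Proof. by case: p. Qed.

Lemma cat_eq_nil (u v : word) : (u ++ v == [::]) = (u == [::]) && (v == [::]).
Proof. by case: u. Qed.

Lemma mem_splits_cons a y s : s \in splits (a :: y) ->
  exists p s', [/\ (p <= a.+1)%N, s' \in splits y &
                   s = (Zword p ++ s'.1, Zword (a.+1 - p) ++ s'.2)].
Proof.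
move=> /allpairsPdep [p [s' [hp hs ->]]]; exists p, s'; split=> //.
by move: hp; rewrite mem_iota add0n ltnS.
Qed.

Lemma deg_splits w s : s \in splits w -> (deg s.1 + deg s.2)%N = deg w.
Proof.
elim: w s => [|a w IH] s /=; first by rewrite inE => /eqP -> /=; rewrite deg_nil.
move=> /mem_splits_cons [p [s' [hp hs ->]]] /=.
by rewrite !deg_cat !deg_Zword deg_cons -(IH _ hs) addnACA subnKC.
Qed.

Lemma splits_fst_nil w s : s \in splits w -> s.1 = [::] -> s = ([::], w).
Proof.
elim: w s => [|a w IH] s /=; first by rewrite inE => /eqP ->.
move=> /mem_splits_cons [p [s' [hp hs ->]]] /= /eqP.
rewrite cat_eq_nil Zword_eq_nil => /andP [/eqP-> /eqP s1].
by rewrite subn0 (IH _ hs s1).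
Qed.

Lemma splits_snd_nil w s : s \in splits w -> s.2 = [::] -> s = (w, [::]).
Proof.
elim: w s => [|a w IH] s /=; first by rewrite inE => /eqP ->.
move=> /mem_splits_cons [p [s' [hp hs ->]]] /= /eqP.
rewrite cat_eq_nil Zword_eq_nil subn_eq0 => /andP [ha /eqP s2].
have -> : p = a.+1 by apply/eqP; rewrite eqn_leq hp.
by rewrite (IH _ hs s2) /= subnn.
Qed.

Lemma count_splits_cons a y (P : pred (word * word)) :
  count P (splits (a :: y)) =
  (\sum_(p <- iota 0 a.+2)
     count (fun s => P (Zword p ++ s.1, Zword (a.+1 - p) ++ s.2)) (splits y))%N.
Proof.
rewrite -sum1_count big_mkcond; under [RHS]eq_bigr do rewrite -sum1_count big_mkcond.
exact: big_allpairs_dep.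
Qed.

Lemma count_splits_fst_nil w : count (pred1 ([::], w)) (splits w) = 1%N.
Proof.
elim: w => [|a w IH] //; rewrite count_splits_cons -[iota 0 _]/(index_iota 0 a.+2).
rewrite big_ltn // big_nat_cond.
rewrite big1 ?addn0 => [|p /andP [/andP [p_gt0 _] _]].
  rewrite subn0 -[RHS]IH; apply: eq_count => -[x y] /=.
  by rewrite !xpair_eqE eqseq_cons eqxx.
apply/eqP; rewrite -leqn0 leqNgt -has_count; apply/hasP => -[s _] /=.
by rewrite xpair_eqE cat_eq_nil Zword_eq_nil eqn0Ngt p_gt0.
Qed.

Lemma count_splits_snd_nil w : count (pred1 (w, [::])) (splits w) = 1%N.
Proof.
elim: w => [|a w IH] //; rewrite count_splits_cons -[iota 0 _]/(index_iota 0 a.+2).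
rewrite big_nat_recr //= big_nat_cond.
rewrite big1 ?add0n => [|p /andP [/andP [_ p_lt] _]].
  rewrite subnn -[RHS]IH; apply: eq_count => -[x y] /=.
  by rewrite !xpair_eqE eqseq_cons eqxx.
apply/eqP; rewrite -leqn0 leqNgt -has_count; apply/hasP => -[s _] /=.
by rewrite xpair_eqE cat_eq_nil Zword_eq_nil subn_eq0 leqNgt p_lt andbF.
Qed.

Lemma sum_triangle (R : nmodType) N (H : nat -> nat -> nat -> R) :
  \sum_(p <- iota 0 N.+1) \sum_(q <- iota 0 p.+1) H q (p - q)%N (N - p)%N =
  \sum_(p <- iota 0 N.+1) \sum_(r <- iota 0 (N - p).+1) H p r (N - p - r)%N.
Proof.
rewrite -[iota 0 N.+1]/(index_iota 0 N.+1).
transitivity (\sum_(0 <= p < N.+1) \sum_(0 <= q < N.+1 | (q <= p)%N)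
                H q (p - q)%N (N - p)%N).
  apply: eq_big_nat => p /andP [_ hp].
  by rewrite -[iota 0 p.+1]/(index_iota 0 p.+1) (big_nat_widen _ _ _ _ _ hp).
rewrite (exchange_big_dep_nat predT) //; apply: eq_big_nat => q /andP [_ hq].
rewrite -(big_nat_widenl _ _ _ _ _ (leq0n q)) -{1}[q]add0n big_addn.
rewrite -[iota 0 _]/(index_iota 0 (N - q).+1) -subSn //.
by apply: eq_bigr => r _; rewrite addnK addnC subnDA.
Qed.

Section SplitSums.
Variable R : nmodType.
Implicit Type F : word * word -> R.

Lemma sum_splits_nil F : \sum_(s <- splits [::]) F s = F ([::], [::]).
Proof. exact: big_seq1. Qed.

Lemma sum_splits_cons a y F :
  \sum_(s <- splits (a :: y)) F s =
  \sum_(p <- iota 0 a.+2) \sum_(s <- splits y)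
     F (Zword p ++ s.1, Zword (a.+1 - p) ++ s.2).
Proof. exact: big_allpairs_dep. Qed.

Lemma sum_splits_cat x y F :
  \sum_(s <- splits (x ++ y)) F s =
  \sum_(s <- splits x) \sum_(t <- splits y) F (s.1 ++ t.1, s.2 ++ t.2).
Proof.
elim: x F => [|a x IH] F; first by rewrite sum_splits_nil; apply: eq_bigr => -[].
rewrite cat_cons !sum_splits_cons; apply: eq_bigr => p _.
by rewrite IH; apply: eq_bigr => s _; apply: eq_bigr => t _; rewrite /= !catA.
Qed.

Lemma sum_splits_Zword_cat p r F :
  \sum_(t <- splits (Zword p ++ r)) F t =
  \sum_(q <- iota 0 p.+1) \sum_(t <- splits r)
     F (Zword q ++ t.1, Zword (p - q) ++ t.2).
Proof.
case: p => [|p]; last exact: sum_splits_cons.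
by rewrite big_seq1; apply: eq_bigr => -[].
Qed.

Lemma perm_sum_splits z z' F :
  (forall u v u' v', perm_eq u u' -> perm_eq v v' -> F (u, v) = F (u', v')) ->
  perm_eq z z' -> \sum_(s <- splits z) F s = \sum_(s <- splits z') F s.
Proof.
elim: z z' F => [|a z IH] z' F HF hp.
  by rewrite perm_sym in hp; move/perm_nilP: hp => ->.
have /splitPr : a \in z' by rewrite -(perm_mem hp) mem_head.
move: hp => /[swap] -[z1 z2] hp; rewrite [RHS]sum_splits_cat exchange_big /=.
transitivity (\sum_(t <- splits (a :: z2 ++ z1)) F t); last first.
  rewrite -cat_cons sum_splits_cat; apply: eq_bigr => t _; apply: eq_bigr => s _.
  by apply: HF; rewrite perm_catC.
rewrite !sum_splits_cons; apply: eq_bigr => p _; apply: IH.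
  by move=> u v u' v' h1 h2; apply: HF; rewrite perm_cat2l.
by rewrite -(perm_cons a) (perm_trans hp) // perm_catC.
Qed.

Lemma sum_splits_coassoc y (G : word -> word -> word -> R) :
  \sum_(s <- splits y) \sum_(t <- splits s.1) G t.1 t.2 s.2 =
  \sum_(s <- splits y) \sum_(t <- splits s.2) G s.1 t.1 t.2.
Proof.
elim: y G => [|a y IH] G; first by rewrite !sum_splits_nil.
pose H i j k := \sum_(s <- splits y) \sum_(t <- splits s.2)
   G (Zword i ++ s.1) (Zword j ++ t.1) (Zword k ++ t.2).
rewrite !sum_splits_cons.
transitivity (\sum_(p <- iota 0 a.+2) \sum_(q <- iota 0 p.+1)
                 H q (p - q)%N (a.+1 - p)%N).
  apply: eq_bigr => p _; under eq_bigr do rewrite /= sum_splits_Zword_cat.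
  rewrite exchange_big; apply: eq_bigr => q _.
  exact: (IH (fun u v w =>
    G (Zword q ++ u) (Zword (p - q) ++ v) (Zword (a.+1 - p) ++ w))).
rewrite sum_triangle; apply: eq_bigr => p _.
by under [RHS]eq_bigr do rewrite /= sum_splits_Zword_cat; rewrite [RHS]exchange_big.
Qed.

End SplitSums.

(** * The coaction and its coinvariants *)

Section Support.
Variables (T : eqType) (R : pzRingType).
Implicit Types (f g H : T -> R) (S : seq T).

Definition supported f S := forall w, f w != 0 -> w \in S.

Lemma supported_catl f S1 S2 : supported f S1 -> supported f (S1 ++ S2).
Proof. by move=> h w /h; rewrite mem_cat => ->. Qed.

Lemma supported_catr f S1 S2 : supported f S2 -> supported f (S1 ++ S2).
Proof. by move=> h w /h; rewrite mem_cat orbC => ->. Qed.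

Lemma supportedD f g S1 S2 :
  supported f S1 -> supported g S2 -> supported (fun x => f x + g x) (S1 ++ S2).
Proof.
move=> hf hg w; rewrite mem_cat; apply: contraTT => /norP [h1 h2].
have /eqP -> : f w == 0 by apply: contraR h1 => /hf.
have /eqP -> : g w == 0 by apply: contraR h2 => /hg.
by rewrite addr0 eqxx.
Qed.

Lemma supportedN f S : supported f S -> supported (fun x => - f x) S.
Proof. by move=> hf w; rewrite oppr_eq0 => /hf. Qed.

Lemma count_natr (P : pred T) S : (count P S)%:R = \sum_(x <- S) (P x)%:R :> R.
Proof.
elim: S => [|x S IH]; first by rewrite big_nil.
by rewrite big_cons /= natrD IH.
Qed.

Lemma sum_delta S H a : uniq S ->
  \sum_(w <- S) (w == a)%:R * H w = (a \in S)%:R * H a.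
Proof.
move=> uS; have [aS|aS] := boolP (a \in S).
  rewrite (bigD1_seq a) //= eqxx big1 ?addr0 // => w /negbTE ->.
  exact: mul0r.
rewrite mul0r big_seq big1 // => w wS.
have -> : (w == a) = false by apply: contraNF aS => /eqP <-.
exact: mul0r.
Qed.

Lemma sum_delta_supported S H a : uniq S -> (H a != 0 -> a \in S) ->
  \sum_(w <- S) (w == a)%:R * H w = H a.
Proof.
move=> uS Sa; rewrite sum_delta //.
by case: (boolP (a \in S)) => [_|/(contraNT Sa)/eqP ->]; rewrite ?mul1r ?mulr0.
Qed.

Lemma eq_sum_supported f G S1 S2 : supported f S1 -> supported f S2 ->
  \sum_(w <- undup S1) f w * G w = \sum_(w <- undup S2) f w * G w.
Proof.
have restrict A B : supported f B ->
    \sum_(w <- undup A) f w * G w = \sum_(w <- [seq x <- undup A | x \in B]) f w * G w.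
  move=> hB; rewrite big_filter [RHS]big_mkcond; apply: eq_bigr => w _.
  by case: ifP => // wB; case: (eqVneq (f w) 0) => [->|/hB]; rewrite ?mul0r // wB.
move=> h1 h2; rewrite (restrict S1 S2 h2) (restrict S2 S1 h1).
apply/perm_big/uniq_perm; rewrite ?filter_uniq ?undup_uniq // => w.
by rewrite !mem_filter !mem_undup andbC.
Qed.

End Support.

Lemma sorted_perm_eqE (w m : word) :
  sorted leq w -> perm_eq w m = (w == sort leq m).
Proof.
move=> sw; apply/idP/eqP => [wm|->]; last by rewrite perm_sort.
apply: (sorted_eq leq_trans anti_leq sw (sort_sorted leq_total m)).
by rewrite perm_sym perm_sort perm_sym.
Qed.

Lemma sum_perm_sorted (W : seq word) (F : word -> int) m : uniq W ->
  {in W, forall w, F w != 0 -> sorted leq w} ->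
  \sum_(w <- W) (perm_eq w m)%:R * F w = (sort leq m \in W)%:R * F (sort leq m).
Proof.
move=> uW sW; rewrite -sum_delta //; apply: eq_big_seq => w wW.
have [->|/(sW _ wW) sw] := eqVneq (F w) 0; first by rewrite !mulr0.
by rewrite sorted_perm_eqE.
Qed.

Definition coproj_count (y u m : word) : int :=
  (count (fun s : word * word => (s.1 == u) && perm_eq s.2 m) (splits y))%:Z.

Lemma coproj_coefE f S u m :
  coproj_coef f S u m = \sum_(w <- undup S) f w * coproj_count w u m.
Proof. by []. Qed.

Lemma coproj_countE y u m :
  coproj_count y u m = \sum_(s <- splits y) ((s.1 == u) && perm_eq s.2 m)%:R.
Proof. by rewrite /coproj_count -natz count_natr. Qed.

Lemma coproj_count_nil y u : coproj_count y u [::] = (y == u)%:R.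
Proof.
rewrite /coproj_count -natz; congr (_%:R).
transitivity (count (fun s => (s == (y, [::])) && (y == u)) (splits y)).
  apply: eq_in_count => s ys /=; have [-> /=|ne] := eqVneq s (y, [::]).
    by rewrite andbT eq_sym.
  apply/negbTE; apply: contra ne => /andP [_ /perm_nilP s2].
  by rewrite (splits_snd_nil ys s2).
case: (y == u).
  rewrite (eq_count (a2 := pred1 (y, [::]))) ?count_splits_snd_nil // => s.
  by rewrite andbT.
by rewrite (eq_count (a2 := pred0)) ?count_pred0 // => s; rewrite andbF.
Qed.

Section Coprojection.
Implicit Types (f g : word -> int) (S : seq word).

Lemma coproj_coef_nil f S u : supported f S -> coproj_coef f S u [::] = f u.
Proof.
move=> fS; rewrite coproj_coefE; under eq_bigr do rewrite coproj_count_nil mulrC.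
by apply: sum_delta_supported => [|/fS]; rewrite ?undup_uniq ?mem_undup.
Qed.

Lemma coproj_coef_neq0 f S u m : coproj_coef f S u m != 0 ->
  exists y s, [/\ y \in S, s \in splits y, s.1 = u & perm_eq s.2 m].
Proof.
pose P s := (s.1 == u) && perm_eq s.2 m.
have [/hasP [y yS /hasP [s ys /andP [/eqP s1 sm]]] _|none] :=
  boolP (has (fun y => has P (splits y)) S); first by exists y, s.
case/eqP; rewrite coproj_coefE big_seq big1 // => y; rewrite mem_undup => yS.
have : ~~ has P (splits y) by apply: contra none => yP; apply/hasP; exists y.
by rewrite has_count -eqn0Ngt /coproj_count => /eqP ->; rewrite mulr0.
Qed.

Lemma coproj_coefD f g S u m :
  coproj_coef (fun x => f x + g x) S u m = coproj_coef f S u m + coproj_coef g S u m.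
Proof. by rewrite !coproj_coefE -big_split; apply: eq_bigr => w _; rewrite mulrDl. Qed.

Lemma coproj_coefN f S u m :
  coproj_coef (fun x => - f x) S u m = - coproj_coef f S u m.
Proof. by rewrite !coproj_coefE -sumrN; apply: eq_bigr => w _; rewrite mulNr. Qed.

Lemma perm_coproj_coef f S u m m' :
  perm_eq m m' -> coproj_coef f S u m = coproj_coef f S u m'.
Proof.
move=> mm'; rewrite !coproj_coefE; apply: eq_bigr => w _; congr (_ * _%:Z).
by apply: eq_count => s; rewrite (permPr mm').
Qed.

Lemma eq_coproj_coef_supported f S1 S2 u m : supported f S1 -> supported f S2 ->
  coproj_coef f S1 u m = coproj_coef f S2 u m.
Proof. exact: eq_sum_supported. Qed.

Definition coproj_bounded f S k :=
  forall u m, (k < deg m)%N -> coproj_coef f S u m = 0.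

Lemma coproj_bounded_max_deg f S : supported f S ->
  coproj_bounded f S (\max_(w <- S) deg w).
Proof.
move=> fS u m degm; apply/eqP; apply: contraTT degm.
move=> /coproj_coef_neq0 [y [s [yS ys _ sm]]]; rewrite -leqNgt.
rewrite -(perm_deg sm) -(leq_add2l (deg s.1)) (deg_splits ys).
by apply: leq_trans (leq_addl _ _); apply: (leq_bigmax_seq (F := deg) _ yS).
Qed.

Lemma in_cotensorP f S u m : in_cotensor f -> supported f S ->
  coproj_coef f S u m = if m == [::] then f u else 0.
Proof.
by move=> [S0 [fS0 fcot]] fS; rewrite -fcot; apply: eq_coproj_coef_supported.
Qed.

Lemma supported_in_cotensor f S : supported f S ->
  (forall u m, m != [::] -> coproj_coef f S u m = 0) -> in_cotensor f.
Proof.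
move=> fS fcot; exists S; split => // u m.
by case: eqP => [->|/eqP]; [exact: coproj_coef_nil | exact: fcot].
Qed.

Lemma eq_in_cotensor f g : f =1 g -> in_cotensor f -> in_cotensor g.
Proof.
move=> fg [S [fS fcot]]; exists S; split => [w|u m]; first by rewrite -fg => /fS.
by rewrite -fg -fcot !coproj_coefE; apply: eq_bigr => w _; rewrite fg.
Qed.

Lemma in_cotensor0 : in_cotensor (fun _ => 0).
Proof. by exists [::]; split => // u m; rewrite coproj_coefE big_nil; case: ifP. Qed.

Lemma in_cotensorD f g : in_cotensor f -> in_cotensor g ->
  in_cotensor (fun x => f x + g x).
Proof.
move=> fcot gcot; have [Sf [fS _]] := fcot; have [Sg [gS _]] := gcot.
apply: (supported_in_cotensor (supportedD fS gS)) => u m m0.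
rewrite coproj_coefD (in_cotensorP _ _ fcot (supported_catl _ fS)).
by rewrite (in_cotensorP _ _ gcot (supported_catr _ gS)) (negbTE m0) addr0.
Qed.

Lemma in_cotensorN f : in_cotensor f -> in_cotensor (fun x => - f x).
Proof.
move=> fcot; have [S [fS _]] := fcot.
apply: (supported_in_cotensor (supportedN fS)) => u m m0.
by rewrite coproj_coefN (in_cotensorP _ _ fcot fS) (negbTE m0) oppr0.
Qed.

End Coprojection.

Definition supported2 (e : word -> word -> int) (W T : seq word) :=
  forall w z, e w z != 0 -> w \in W /\ z \in T.

Section MultiplicationMap.
Implicit Types (c d e : word -> word -> int) (f : word -> int).

Lemma supported_mult_map e W T :
  supported2 e W T -> supported (mult_map e) [seq w ++ z | w <- W, z <- T].
Proof.
move=> eWT x; apply: contraR => xWT; rewrite /mult_map big1 // => i _.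
apply/eqP; apply: contraR xWT => /eWT [wW zT].
by rewrite -(cat_take_drop i x) allpairs_f.
Qed.

Lemma tensor_elt_supported c : tensor_elt c -> exists W T, supported2 c W T.
Proof.
case=> [[W cW] _ ccot].
have [T cT] : exists T, forall w, w \in W -> supported (c w) T.
  elim: W {cW} => [|w0 W [T cT]]; first by exists [::].
  have [S0 [c0S0 _]] := ccot w0; exists (S0 ++ T) => w.
  by rewrite inE => /predU1P [->|/cT]; [exact: supported_catl | exact: supported_catr].
by exists W, T => w z czw; have wW := cW _ _ czw; split => //; exact: (cT _ wW _ czw).
Qed.

Lemma mult_mapD c d x :
  mult_map (fun w z => c w z + d w z) x = mult_map c x + mult_map d x.
Proof. exact: big_split. Qed.

Lemma mult_mapN c x : mult_map (fun w z => - c w z) x = - mult_map c x.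
Proof. exact: sumrN. Qed.

Lemma tensor_eltD c d : tensor_elt c -> tensor_elt d ->
  tensor_elt (fun w z => c w z + d w z).
Proof.
case=> [[Wc cW] cs ccot] [[Wd dW] ds dcot]; split.
- exists (Wc ++ Wd) => w z; rewrite mem_cat.
  by have [->|/cW ->] := eqVneq (c w z) 0; rewrite // add0r => /dW ->; rewrite orbT.
- by move=> w z; have [->|/cs //] := eqVneq (c w z) 0; rewrite add0r => /ds.
- by move=> w; apply: in_cotensorD.
Qed.

Lemma tensor_eltN c : tensor_elt c -> tensor_elt (fun w z => - c w z).
Proof.
case=> [[W cW] cs ccot]; split; last by move=> w; apply: in_cotensorN.
  by exists W => w z; rewrite oppr_eq0 => /cW.
by move=> w z; rewrite oppr_eq0 => /cs.
Qed.

Lemma sum_take_drop_eq (x w z : word) :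
  \sum_(i < (size x).+1) ((take i x == w) && (drop i x == z))%:R =
  (x == w ++ z)%:R :> int.
Proof.
have [->|xwz] := eqVneq x (w ++ z); last first.
  rewrite big1 // => i _; case: andP => // -[/eqP tx /eqP dx].
  by rewrite -tx -dx cat_take_drop eqxx in xwz.
have wi : (size w < (size (w ++ z)).+1)%N by rewrite size_cat ltnS leq_addr.
rewrite (bigD1 (Ordinal wi)) //= take_size_cat // drop_size_cat // !eqxx /=.
rewrite big1 ?addr0 // => i /= iw; case: andP => // -[/eqP ti _].
case/eqP: iw; apply: val_inj => /=.
by rewrite -[in RHS]ti size_takel // -ltnS.
Qed.

Lemma mult_mapE e W T x : uniq W -> uniq T -> supported2 e W T ->
  mult_map e x = \sum_(w <- W) \sum_(z <- T) (x == w ++ z)%:R * e w z.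
Proof.
move=> uW uT eWT; rewrite /mult_map.
have delta2 a b : e a b = \sum_(w <- W) \sum_(z <- T) ((w == a) && (z == b))%:R * e w z.
  rewrite -(sum_delta_supported (H := e^~ b) uW); last by case/eWT.
  apply: eq_bigr => w _; rewrite -(sum_delta_supported (H := e w) uT); last by case/eWT.
  by rewrite mulr_sumr; apply: eq_bigr => z _; rewrite mulrA -natrM mulnb.
under eq_bigr do rewrite delta2; rewrite exchange_big; apply: eq_bigr => w _.
rewrite exchange_big; apply: eq_bigr => z _.
rewrite -mulr_suml -sum_take_drop_eq; congr (_ * _).
by apply: eq_bigr => i _; rewrite !(eq_sym w) (eq_sym z).
Qed.

Lemma sum_mult_map e W T (G : word -> int) : supported2 e W T ->
  \sum_(x <- undup [seq w ++ z | w <- W, z <- T]) mult_map e x * G x =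
  \sum_(w <- undup W) \sum_(z <- undup T) e w z * G (w ++ z).
Proof.
set X := undup _ => eWT.
have eWT' : supported2 e (undup W) (undup T) by move=> w z /eWT; rewrite !mem_undup.
under eq_bigr do rewrite (mult_mapE _ (undup_uniq W) (undup_uniq T) eWT') mulr_suml.
rewrite exchange_big; apply: eq_bigr => w _.
under eq_bigr do rewrite mulr_suml.
rewrite exchange_big; apply: eq_bigr => z _.
have [->|ewz] := eqVneq (e w z) 0.
  by rewrite mul0r big1 // => x _; rewrite mulr0 mul0r.
have wzX : w ++ z \in X by case: (eWT _ _ ewz) => wW zT; rewrite mem_undup allpairs_f.
rewrite [RHS]mulrC.
rewrite -[in RHS](sum_delta_supported (H := G) (undup_uniq _) (fun _ => wzX)).
rewrite mulr_suml; apply: eq_bigr => x _.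
by rewrite mulrAC mulrC eq_sym.
Qed.

(* The coefficient of u (x) [m] in (a (x) [b]) . rho f, for a coinvariant f. *)
Lemma sum_cotensor_shift f T (a b u m : word) : in_cotensor f -> supported f T ->
  \sum_(z <- undup T) f z *
     \sum_(t <- splits z) ((a ++ t.1 == u) && perm_eq (b ++ t.2) m)%:R
  = ((prefix a u) && perm_eq b m)%:R * f (drop (size a) u).
Proof.
move=> fcot fT; case: prefixP => [[u' ->]|not_pre]; last first.
  rewrite mul0r big1 // => z _; rewrite big1 ?mulr0 // => t _.
  by case: eqP => //= at1; case: not_pre; exists t.1.
rewrite drop_size_cat //=.
under eq_bigr do under eq_bigr do rewrite eqseq_cat // eqxx andTb.
have [[m' mbm']|no_m'] := classic (exists m', perm_eq m (b ++ m')).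
  under eq_bigr do under eq_bigr do rewrite (permPr mbm') perm_cat2l.
  rewrite (permPr mbm') -{1}[b]cats0 perm_cat2l.
  transitivity (coproj_coef f T u' m').
    by rewrite coproj_coefE; apply: eq_bigr => z _; rewrite coproj_countE.
  rewrite (in_cotensorP _ _ fcot fT) perm_sym.
  have [->|m'0] := eqVneq m' [::]; first by rewrite mul1r.
  suff /negbTE -> : ~~ perm_eq m' [::] by rewrite mul0r.
  by apply: contra m'0 => /perm_nilP ->.
have -> : perm_eq b m = false.
  by apply/negP => bm; apply: no_m'; exists [::]; rewrite cats0 perm_sym.
rewrite mul0r big1 // => z _; rewrite big1 ?mulr0 // => t _.
by case: andP => // -[_ bt]; case: no_m'; exists t.2; rewrite perm_sym.
Qed.

Lemma coproj_mult_map e W T X u m : supported2 e W T ->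
  (forall w, in_cotensor (e w)) -> supported (mult_map e) X ->
  coproj_coef (mult_map e) X u m =
  \sum_(w <- undup W) \sum_(s <- splits w)
      ((prefix s.1 u) && perm_eq s.2 m)%:R * e w (drop (size s.1) u).
Proof.
move=> eWT ecot eX.
rewrite (eq_coproj_coef_supported _ _ eX (supported_mult_map eWT)).
rewrite coproj_coefE sum_mult_map //; apply: eq_bigr => w _.
under eq_bigr do rewrite coproj_countE sum_splits_cat mulr_sumr.
rewrite exchange_big; apply: eq_bigr => s _ /=.
by apply: sum_cotensor_shift => // z /eWT [].
Qed.

Lemma coproj_mult_map_top e W T X u m : supported2 e W T ->
  (forall w, in_cotensor (e w)) -> supported (mult_map e) X ->
  (forall w z, e w z != 0 -> (deg w <= deg m)%N) ->
  coproj_coef (mult_map e) X u m = \sum_(w <- undup W) (perm_eq w m)%:R * e w u.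
Proof.
move=> eWT ecot eX edeg; rewrite (coproj_mult_map _ _ eWT ecot eX).
apply: eq_bigr => w _; transitivity
  (\sum_(s <- splits w) (s == ([::], w))%:R * ((perm_eq w m)%:R * e w u)).
  apply: eq_big_seq => s ws; have [-> /=|s_ne] := eqVneq s ([::], w).
    by rewrite prefix0s drop0 mul1r.
  rewrite mul0r; case: andP => [[_ sm]|]; last by rewrite mul0r.
  have [->|/edeg degw] := eqVneq (e w (drop (size s.1) u)) 0; first by rewrite mulr0.
  case/eqP: s_ne; apply: (splits_fst_nil ws); apply/eqP; rewrite -deg_eq0.
  rewrite -(eqn_add2r (deg s.2)) add0n (deg_splits ws) eqn_leq (perm_deg sm) degw.
  by rewrite -(perm_deg sm) -(deg_splits ws) leq_addl.
by rewrite -mulr_suml -count_natr count_splits_fst_nil mul1r.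
Qed.

End MultiplicationMap.

(** * Injectivity *)

Section Injectivity.
Variable d : word -> word -> int.
Hypotheses (d_tensor : tensor_elt d) (d_mult0 : forall x, mult_map d x = 0).

Lemma mult_map_eq0_top n : (forall w x, (n < deg w)%N -> d w x = 0) ->
  forall w x, deg w = n -> d w x = 0.
Proof.
move=> d_top w x degw; apply/eqP; apply: contraT => dwx.
have [W [T dWT]] := tensor_elt_supported d_tensor.
have [_ d_sorted d_cot] := d_tensor.
have d_le w' z : d w' z != 0 -> (deg w' <= deg w)%N.
  by rewrite degw leqNgt; apply: contraNN => /d_top ->.
have := coproj_mult_map_top x dWT d_cot (supported_mult_map dWT) d_le.
rewrite sum_perm_sorted ?undup_uniq // => [|w' _]; last exact: d_sorted.
rewrite (sorted_sort leq_trans (d_sorted _ _ dwx)) mem_undup (dWT _ _ dwx).1 mul1r.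
rewrite coproj_coefE big1 => [/esym/eqP|y _]; first by rewrite (negbTE dwx).
by rewrite d_mult0 mul0r.
Qed.

Lemma mult_map_eq0 w x : d w x = 0.
Proof.
have [W [T dWT]] := tensor_elt_supported d_tensor.
pose B := (\max_(w <- W) deg w)%N.
suff: forall k w x, (B < deg w + k)%N -> d w x = 0.
  by move/(_ B.+1 w x); apply; rewrite addnS ltnS leq_addl.
elim=> [|k IHk] {}w {}x; rewrite ?addn0 => Bw.
  apply/eqP; apply: contraTT Bw => /dWT [wW _]; rewrite -leqNgt.
  exact: (leq_bigmax_seq (F := deg) _ wW).
have [|wkB] := ltnP B (deg w + k); first exact: IHk.
apply: (mult_map_eq0_top (n := deg w)) => // w' x' ww'; apply: IHk.
by apply: leq_trans Bw _; rewrite addnS -addSn leq_add2r.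
Qed.

End Injectivity.

Lemma mult_map_inj c1 c2 : tensor_elt c1 -> tensor_elt c2 ->
  (forall x, mult_map c1 x = mult_map c2 x) -> forall w x, c1 w x = c2 w x.
Proof.
move=> c1_tensor c2_tensor c12 w x; apply/eqP; rewrite -subr_eq0; apply/eqP.
apply: (mult_map_eq0 (d := fun w x => c1 w x - c2 w x)) => [|y].
  exact: tensor_eltD c1_tensor (tensor_eltN c2_tensor).
by rewrite mult_mapD mult_mapN c12 subrr.
Qed.

(** * Surjectivity *)

(* The coefficient of [m'] (x) [m] in (pi (x) pi) Delta z. *)
Definition sym_coproj_count (z m' m : word) : int :=
  \sum_(t <- splits z) (perm_eq t.1 m' && perm_eq t.2 m)%:R.

Lemma perm_sym_coproj_count z z' m' m :
  perm_eq z z' -> sym_coproj_count z m' m = sym_coproj_count z' m' m.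
Proof.
apply: perm_sum_splits => u v u' v' uu' vv' /=.
by rewrite (permPl uu') (permPl vv').
Qed.

Lemma sum_coproj_count_comp y (U : seq word) v m m' : uniq U ->
  {in splits y, forall s, s.1 \in U} ->
  \sum_(u <- U) coproj_count y u m * coproj_count u v m' =
  \sum_(s <- splits y) (s.1 == v)%:R * sym_coproj_count s.2 m' m.
Proof.
move=> uU yU; transitivity
  (\sum_(s <- splits y) (perm_eq s.2 m)%:R * coproj_count s.1 v m').
  under eq_bigr do rewrite coproj_countE mulr_suml.
  rewrite exchange_big; apply: eq_big_seq => s ys.
  rewrite -(sum_delta_supported (H := fun u =>
    (perm_eq s.2 m)%:R * coproj_count u v m') uU) => [|_]; last exact: yU.
  by apply: eq_bigr => u _; rewrite mulrA -natrM mulnb eq_sym.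
transitivity (\sum_(s <- splits y) \sum_(t <- splits s.1)
    ((t.1 == v) && perm_eq t.2 m' && perm_eq s.2 m)%:R : int).
  apply: eq_bigr => s _; rewrite coproj_countE mulr_sumr; apply: eq_bigr => t _.
  by rewrite -natrM mulnb andbC.
rewrite (sum_splits_coassoc y (fun t1 t2 s2 =>
    ((t1 == v) && perm_eq t2 m' && perm_eq s2 m)%:R : int)).
apply: eq_bigr => s _; rewrite /sym_coproj_count mulr_sumr; apply: eq_bigr => t _.
by rewrite -natrM mulnb andbA.
Qed.

Section LeadingTerm.
Variables (a : word -> int) (S : seq word).
Hypothesis a_supp : supported a S.

Definition split_heads := [seq s.1 | y <- S, s <- splits y].

Definition sorted_tails := undup [seq sort leq s.2 | y <- S, s <- splits y].

Lemma sorted_tails_sorted w : w \in sorted_tails -> sorted leq w.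
Proof.
by rewrite mem_undup => /allpairsPdep [y [s [_ _ ->]]]; apply: sort_sorted leq_total _.
Qed.

Lemma mem_sorted_tails y s : y \in S -> s \in splits y -> sort leq s.2 \in sorted_tails.
Proof. by move=> yS ys; rewrite mem_undup; apply/allpairsPdep; exists y, s. Qed.

Lemma supported_coproj_coef m : supported (fun x => coproj_coef a S x m) split_heads.
Proof.
move=> x /coproj_coef_neq0 [y [s [yS ys <- _]]].
by apply/allpairsPdep; exists y, s.
Qed.

Lemma sym_coproj_count_sorted_tails y s m' m : y \in S -> s \in splits y ->
  sym_coproj_count s.2 m' m =
  \sum_(z <- sorted_tails) (perm_eq z s.2)%:R * sym_coproj_count z m' m.
Proof.
move=> yS ys; rewrite sum_perm_sorted ?undup_uniq // => [|z zZ _]; last first.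
  exact: sorted_tails_sorted zZ.
rewrite (mem_sorted_tails yS ys) mul1r.
by apply: perm_sym_coproj_count; rewrite perm_sym perm_sort.
Qed.

Lemma coproj_coef_iter m v m' :
  coproj_coef (fun x => coproj_coef a S x m) split_heads v m' =
  \sum_(z <- sorted_tails) sym_coproj_count z m' m * coproj_coef a S v z.
Proof.
rewrite coproj_coefE; under eq_bigr do rewrite coproj_coefE mulr_suml.
rewrite exchange_big; transitivity (\sum_(y <- undup S) a y *
  \sum_(s <- splits y) (s.1 == v)%:R * sym_coproj_count s.2 m' m).
  apply: eq_big_seq => y; rewrite mem_undup => yS.
  under eq_bigr do rewrite -mulrA.
  rewrite -mulr_sumr sum_coproj_count_comp ?undup_uniq // => s ys.
  by rewrite mem_undup; apply/allpairsPdep; exists y, s.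
under [RHS]eq_bigr do rewrite coproj_coefE mulr_sumr.
rewrite [RHS]exchange_big; apply: eq_big_seq => y; rewrite mem_undup => yS.
rewrite mulr_sumr; under [RHS]eq_bigr do rewrite coproj_countE !mulr_sumr.
rewrite [RHS]exchange_big; apply: eq_big_seq => s ys.
rewrite (sym_coproj_count_sorted_tails _ _ yS ys) !mulr_sumr; apply: eq_bigr => z _.
by rewrite perm_sym -mulnb natrM [RHS]mulrC -!mulrA.
Qed.

Lemma in_cotensor_coproj_coef_top m : coproj_bounded a S (deg m) ->
  in_cotensor (fun x => coproj_coef a S x m).
Proof.
(* A term with m' <> [::] involves some [z] with deg z = deg m' + deg m > deg m. *)
move=> a_bd; apply: (supported_in_cotensor (@supported_coproj_coef m)) => v m' m'0.
rewrite coproj_coef_iter big1 // => z _.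
have [->|Kz] := eqVneq (sym_coproj_count z m' m) 0; first by rewrite mul0r.
have [t zt /andP [tm' tm]] :
    exists2 t, t \in splits z & perm_eq t.1 m' && perm_eq t.2 m.
  apply/hasP; apply: contraNT Kz => /hasPn none.
  by rewrite /sym_coproj_count big_seq big1 // => t /none /negbTE ->.
rewrite a_bd ?mulr0 // -(deg_splits zt) (perm_deg tm') (perm_deg tm).
by rewrite -[X in (X < _)%N]add0n ltn_add2r lt0n deg_eq0.
Qed.

(* The part of rho a of Sym-degree k, as an element of Sym~ (x) NSym: the
   nondecreasing word w stands for the monomial [w]. *)
Definition top_part k w x :=
  if (w \in sorted_tails) && (deg w == k) then coproj_coef a S x w else 0.

Lemma supported2_top_part k : supported2 (top_part k) sorted_tails split_heads.
Proof.
move=> w x; rewrite /top_part; case: andP => [[wT _] xw|]; last by rewrite eqxx.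
by split=> //; apply: (supported_coproj_coef xw).
Qed.

Lemma tensor_elt_top_part k : coproj_bounded a S k -> tensor_elt (top_part k).
Proof.
move=> a_bd; split.
- by exists sorted_tails => w x /supported2_top_part [].
- by move=> w x /supported2_top_part [/sorted_tails_sorted].
move=> w; rewrite /top_part; case: andP => [[_ /eqP degw]|_]; last exact: in_cotensor0.
by apply: in_cotensor_coproj_coef_top; rewrite degw.
Qed.

Lemma coproj_coef_mult_map_top_part k X u m : coproj_bounded a S k ->
  supported (mult_map (top_part k)) X -> (k <= deg m)%N ->
  coproj_coef (mult_map (top_part k)) X u m = coproj_coef a S u m.
Proof.
move=> a_bd eX km; have [_ _ e_cot] := tensor_elt_top_part a_bd.
have e_deg w z : top_part k w z != 0 -> (deg w <= deg m)%N.
  by rewrite /top_part; case: andP => // -[_ /eqP ->].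
rewrite (coproj_mult_map_top u (@supported2_top_part k) e_cot eX e_deg).
rewrite sum_perm_sorted ?undup_uniq // => [|w _ /supported2_top_part []]; last first.
  by move=> /sorted_tails_sorted.
have sm : perm_eq (sort leq m) m by rewrite perm_sort.
rewrite mem_undup /top_part; have [smT|smT] := boolP (sort leq m \in _); last first.
  rewrite mul0r; apply/esym/eqP; apply: contraNT smT.
  move=> /coproj_coef_neq0 [y [s [yS ys _ s2m]]].
  have -> : sort leq m = sort leq s.2.
    by apply/esym/(perm_sortP leq_total leq_trans anti_leq).
  exact: mem_sorted_tails yS ys.
rewrite mul1r /= (perm_deg sm) (perm_coproj_coef _ _ _ sm).
by case: eqP => // /eqP neq; rewrite a_bd // ltn_neqAle eq_sym neq km.
Qed.

Lemma coproj_bounded_sub_top_part k X : coproj_bounded a S k.+1 ->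
  supported (mult_map (top_part k.+1)) X ->
  coproj_bounded (fun x => a x - mult_map (top_part k.+1) x) (S ++ X) k.
Proof.
move=> a_bd eX u m km; rewrite coproj_coefD coproj_coefN.
rewrite (eq_coproj_coef_supported _ _ (supported_catl _ a_supp) a_supp).
by rewrite (coproj_coef_mult_map_top_part _ a_bd (supported_catr _ eX)) ?subrr.
Qed.

End LeadingTerm.

Section Surjectivity.
Variable f : word -> int.

Definition tensor_unit (w x : word) : int := if w == [::] then f x else 0.

Lemma tensor_elt_unit : in_cotensor f -> tensor_elt tensor_unit.
Proof.
rewrite /tensor_unit => fcot; split.
- by exists [:: [::]] => w x; case: ifP => // /eqP ->.
- by move=> w x; case: ifP => // /eqP ->.
by move=> w; case: (w == [::]); [exact: eq_in_cotensor fcot | exact: in_cotensor0].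
Qed.

Lemma mult_map_unit x : mult_map tensor_unit x = f x.
Proof.
rewrite /mult_map big_ord_recl /tensor_unit take0 drop0 eqxx big1 ?addr0 // => i _.
by rewrite -size_eq0 size_takel //= /bump add1n ltn_ord.
Qed.

Lemma in_cotensor_bounded0 S : supported f S -> coproj_bounded f S 0 -> in_cotensor f.
Proof.
move=> fS f_bd; apply: (supported_in_cotensor fS) => u m m0.
by apply: f_bd; rewrite lt0n deg_eq0.
Qed.

End Surjectivity.

Lemma mult_map_surj k a S : supported a S -> coproj_bounded a S k ->
  exists c, tensor_elt c /\ forall x, mult_map c x = a x.
Proof.
elim: k a S => [|k IHk] a S aS a_bd.
  exists (tensor_unit a); split; last exact: mult_map_unit.
  exact/tensor_elt_unit/(in_cotensor_bounded0 aS).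
set e := top_part a S k.+1.
have eX := supported_mult_map (@supported2_top_part a S k.+1).
have [c [c_tensor ca]] :=
  IHk _ _ (supportedD aS (supportedN eX)) (coproj_bounded_sub_top_part aS a_bd eX).
exists (fun w x => c w x + e w x); split.
  exact: tensor_eltD c_tensor (tensor_elt_top_part a_bd).
by move=> x; rewrite mult_mapD ca subrK.
Qed.

Theorem mainTheorem15 :
  (forall c, tensor_elt c -> NSym_elt (mult_map c)) /\
  (forall n, NSym_elt n -> exists c, tensor_elt c /\ forall x, mult_map c x = n x) /\
  (forall c1 c2, tensor_elt c1 -> tensor_elt c2 ->
     (forall x, mult_map c1 x = mult_map c2 x) -> forall w x, c1 w x = c2 w x).
Proof.
split; last split.
- move=> c /tensor_elt_supported [W [T cWT]].
  by exists [seq w ++ z | w <- W, z <- T]; apply: supported_mult_map.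
- by move=> n [S nS]; apply: mult_map_surj nS (coproj_bounded_max_deg nS).
- exact: mult_map_inj.
Qed.
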